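(* Fix $A,b,c$ and a base sequence $(B_1,\dots,B_N;\mathcal{K}_0,\mathcal{J}_0,\mathcal{K}_{N+1},\mathcal{J}_{N+1})$. Its validity region $\mathcal{T}$, i.e. the set of all $(\beta,\gamma,T)\in\mathbb{R}^K\times\mathbb{R}^J\times[0,\infty)$ for which the base sequence is optimal, is a convex polyhedral cone.
   Context: Let $A$ be a real $K\times J$ matrix, $b\in\mathbb{R}^K$, $c\in\mathbb{R}^J$; the remaining data of M-CLP are $\beta\in\mathbb{R}^K$, $\gamma\in\mathbb{R}^J$ and the horizon $T$. (M-CLP: maximize $\int_{0-}^T(\gamma+(T-t)c)^\top dU(t)$ over nonnegative, non-decreasing, right-continuous $U$ with $U(0-)=0$ subject to $AU(t)\le\beta+bt$, $0\le t\le T$; M-CLP$^*$: minimize $\int_{0-}^T(\beta+(T-t)b)^\top dP(t)$ over nonnegative non-decreasing right-continuous $P$, $P(0-)=0$, subject to $A^\top P(t)\ge\gamma+ct$.) Bases: index sets $\mathcal{K}\subseteq\{1..K\},\mathcal{J}\subseteq\{1..J\}$ such that $\dot x_k$ ($k\in\mathcal{K}$), $u_j$ ($j\notin\mathcal{J}$) are $K$ variables with independent columns in $[A\ I]$; primal basic solution solves $Au+\dot x=b$ with $u_j=0$ ($j\in\mathcal{J}$), $\dot x_k=0$ ($k\notin\mathcal{K}$); dual basic solution solves $A^\top p-\dot q=c$ with $p_k=0$ ($k\in\mathcal{K}$), $\dot q_j=0$ ($j\notin\mathcal{J}$). Admissible: $u,p\ge0$. Adjacent: one pivot apart, primal variable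 $v_n$ leaving from $B_n$ to $B_{n+1}$. A base sequence consists of admissible, consecutively adjacent bases $B_1..B_N$ (index sets $\mathcal{K}_n,\mathcal{J}_n$, rates $u^n,\dot x^n,p^n,\dot q^n$) plus index sets $\mathcal{K}_0,\mathcal{J}_0,\mathcal{K}_{N+1},\mathcal{J}_{N+1}$ with $\mathcal{K}_0\subseteq\mathcal{K}_1$, $\mathcal{J}_{N+1}\subseteq\mathcal{J}_N$ (these depend only on $A,b,c$). The base-sequence system for data $(\beta,\gamma,T)$ in unknowns $\mathbf{u}^0,\mathbf{u}^N,q^N,\mathbf{q}^0\in\mathbb{R}^J$, $x^0,\mathbf{x}^N,\mathbf{p}^0,\mathbf{p}^N\in\mathbb{R}^K$, $\tau_1..\tau_N$, with $x^n=x^0+\sum_{m\le n}\dot x^m\tau_m$, $q^n=q^N+\sum_{m>n}\dot q^m\tau_m$, is: (a) $x^n_k=0$ if $v_n=\dot x_k$, $q^n_j=0$ if $v_n=u_j$ ($n=1..N-1$); (b) $\sum\tau_n=T$; (c) $\mathbf{u}^0_j=0$ ($j\in\mathcal{J}_0$), $x^0_k=0$ ($k\notin\mathcal{K}_0$), $\mathbf{p}^0_k=0$ ($k\in\mathcal{K}_0$), $\mathbf{q}^0_j=0$ ($j\notin\mathcal{J}_0$), $\mathbf{p}^N_k=0$ ($k\in\mathcal{K}_{N+1}$), $q^N_j=0$ ($j\notin\mathcal{J}_{N+1}$), $\mathbf{u}^N_j=0$ ($j\in\mathcal{J}_{N+1}$), $\mathbf{x}^N_k=0$ ($k\notin\mathcal{K}_{N+1}$);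 (d) $A\mathbf{u}^0+x^0=\beta$, $A^\top\mathbf{p}^N-q^N=\gamma$; (e) $A\mathbf{u}^N+\mathbf{x}^N-x^N=0$, $A^\top\mathbf{p}^0-\mathbf{q}^0+q^0=0$. The base sequence is optimal for $(\beta,\gamma,T)$ if this system has a solution in which all boundary values, all $\tau_n$, and all $x^n,q^n$ ($n=0..N$) are nonnegative. *)

From HB Require Import structures.
From mathcomp Require Import all_boot all_order all_algebra.
Set Implicit Arguments. Unset Strict Implicit. Unset Printing Implicit Defensive.
Import Order.TTheory GRing.Theory Num.Theory.
Local Open Scope ring_scope.

Section MCLP.
Variables (R : realFieldType) (K J : nat).
Variables (A : 'M[R]_(K, J)) (b : 'cV[R]_K) (c : 'cV[R]_J).

Definition nonneg_cv n (v : 'cV[R]_n) : Prop := forall i, 0 <= v i 0.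

(* Primal variables: u_j (inl j) and xdot_k (inr k). *)
Definition pvar := ('I_J + 'I_K)%type.

Definition basic_vars (Ks : {set 'I_K}) (Js : {set 'I_J}) : {set pvar} :=
  [set v : pvar | match v with inl j => j \notin Js | inr k => k \in Ks end].

(* (Ks, Js) is a basis: the K variables xdot_k (k in Ks), u_j (j notin Js)
   are K in number and have linearly independent columns in [A I]. *)
Definition is_basis (Ks : {set 'I_K}) (Js : {set 'I_J}) : Prop :=
  (#|Ks| + #|~: Js| = K)%N /\
  forall (w : 'cV[R]_J) (y : 'cV[R]_K),
    (forall j, j \in Js -> w j 0 = 0) ->
    (forall k, k \notin Ks -> y k 0 = 0) ->
    A *m w + y = 0 -> w = 0 /\ y = 0.

Definition primal_basic_sol (Ks : {set 'I_K}) (Js : {set 'I_J}) (u : 'cV[R]_J) (xd : 'cV[R]_K) : Prop :=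
  A *m u + xd = b /\ (forall j, j \in Js -> u j 0 = 0) /\
  (forall k, k \notin Ks -> xd k 0 = 0).

Definition dual_basic_sol (Ks : {set 'I_K}) (Js : {set 'I_J}) (p : 'cV[R]_K) (qd : 'cV[R]_J) : Prop :=
  A^T *m p - qd = c /\ (forall k, k \in Ks -> p k 0 = 0) /\
  (forall j, j \notin Js -> qd j 0 = 0).

Definition adjacent_leaving (Ks1 Ks2 : {set 'I_K}) (Js1 Js2 : {set 'I_J}) (v : pvar) : Prop :=
  v \in basic_vars Ks1 Js1 /\
  exists w : pvar, w \notin basic_vars Ks1 Js1 /\
    basic_vars Ks2 Js2 = w |: (basic_vars Ks1 Js1 :\ v).

(* A base sequence: bases B_1..B_N given by (Ks n, Js n), n = 1..N, with rates
   u n, xd n, p n, qd n; pivot variables v n (n = 1..N-1) leaving from B_n to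
   B_{n+1}; plus boundary index sets Ks 0, Js 0, Ks (N+1), Js (N+1). *)
Definition base_sequence (N : nat) (Ks : nat -> {set 'I_K}) (Js : nat -> {set 'I_J})
    (v : nat -> pvar) (u : nat -> 'cV[R]_J) (xd : nat -> 'cV[R]_K)
    (p : nat -> 'cV[R]_K) (qd : nat -> 'cV[R]_J) : Prop :=
  (0 < N)%N /\
  (forall n, (1 <= n <= N)%N ->
     [/\ is_basis (Ks n) (Js n),
         primal_basic_sol (Ks n) (Js n) (u n) (xd n),
         dual_basic_sol (Ks n) (Js n) (p n) (qd n),
         nonneg_cv (u n) & nonneg_cv (p n)]) /\
  (forall n, (1 <= n < N)%N ->
     adjacent_leaving (Ks n) (Ks n.+1) (Js n) (Js n.+1) (v n)) /\
  Ks 0%N \subset Ks 1%N /\ Js N.+1 \subset Js N.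

Definition xstate (x0 : 'cV[R]_K) (xd : nat -> 'cV[R]_K) (tau : nat -> R) (n : nat)
  : 'cV[R]_K := x0 + \sum_(1 <= m < n.+1) tau m *: xd m.

Definition qstate (N : nat) (qN : 'cV[R]_J) (qd : nat -> 'cV[R]_J) (tau : nat -> R)
  (n : nat) : 'cV[R]_J := qN + \sum_(n.+1 <= m < N.+1) tau m *: qd m.

Definition bs_optimal (N : nat) (Ks : nat -> {set 'I_K}) (Js : nat -> {set 'I_J})
    (v : nat -> pvar) (xd : nat -> 'cV[R]_K) (qd : nat -> 'cV[R]_J)
    (beta : 'cV[R]_K) (gamma : 'cV[R]_J) (T : R) : Prop :=
  exists (u0 uN qN q0 : 'cV[R]_J) (x0 xN p0 pN : 'cV[R]_K) (tau : nat -> R),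
    let x := xstate x0 xd tau in
    let q := qstate N qN qd tau in
    (forall n, (1 <= n < N)%N ->
       (forall k, v n = inr k -> x n k 0 = 0) /\
       (forall j, v n = inl j -> q n j 0 = 0)) /\
    \sum_(1 <= n < N.+1) tau n = T /\
    (forall j, j \in Js 0%N -> u0 j 0 = 0) /\
    (forall k, k \notin Ks 0%N -> x0 k 0 = 0) /\
    (forall k, k \in Ks 0%N -> p0 k 0 = 0) /\
    (forall j, j \notin Js 0%N -> q0 j 0 = 0) /\
    (forall k, k \in Ks N.+1 -> pN k 0 = 0) /\
    (forall j, j \notin Js N.+1 -> qN j 0 = 0) /\
    (forall j, j \in Js N.+1 -> uN j 0 = 0) /\
    (forall k, k \notin Ks N.+1 -> xN k 0 = 0) /\
    A *m u0 + x0 = beta /\ A^T *m pN - qN = gamma /\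
    A *m uN + xN - x N = 0 /\ A^T *m p0 - q0 + q 0%N = 0 /\
    nonneg_cv u0 /\ nonneg_cv uN /\ nonneg_cv qN /\ nonneg_cv q0 /\
    nonneg_cv x0 /\ nonneg_cv xN /\ nonneg_cv p0 /\ nonneg_cv pN /\
    (forall n, (1 <= n <= N)%N -> 0 <= tau n) /\
    (forall n, (n <= N)%N -> nonneg_cv (x n) /\ nonneg_cv (q n)).

Definition validity_region (N : nat) (Ks : nat -> {set 'I_K}) (Js : nat -> {set 'I_J}) (v : nat -> pvar) (xd : nat -> 'cV[R]_K) (qd : nat -> 'cV[R]_J) (beta : 'cV[R]_K) (gamma : 'cV[R]_J) (T : R)
  : Prop := 0 <= T /\ bs_optimal N Ks Js v xd qd beta gamma T.

Definition polyhedral_cone (S : 'cV[R]_K -> 'cV[R]_J -> R -> Prop) : Prop :=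
  exists (m : nat) (M1 : 'M[R]_(m, K)) (M2 : 'M[R]_(m, J)) (M3 : 'cV[R]_m),
    forall beta gamma T,
      S beta gamma T <-> nonneg_cv (M1 *m beta + M2 *m gamma + T *: M3).

Definition convex3 (S : 'cV[R]_K -> 'cV[R]_J -> R -> Prop) : Prop :=
  forall b1 g1 T1 b2 g2 T2 (l : R), 0 <= l <= 1 ->
    S b1 g1 T1 -> S b2 g2 T2 ->
    S (l *: b1 + (1 - l) *: b2) (l *: g1 + (1 - l) *: g2) (l * T1 + (1 - l) * T2).

End MCLP.

From HB Require Import structures.
From mathcomp Require Import all_boot all_order all_algebra.
From mathcomp Require Import ring zify.
Set Implicit Arguments. Unset Strict Implicit. Unset Printing Implicit Defensive.
Import Order.TTheory GRing.Theory Num.Theory.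
Local Open Scope ring_scope.

(* For fixed data, the optimality of the base sequence is the solvability of a
   finite system of linear equations and inequalities in (beta, gamma, T) and
   the unknowns (boundary values and tau_1, ..., tau_N), the states x^n, q^n
   being linear in the unknowns.  Fourier-Motzkin elimination removes one
   scalar unknown at a time, pairing every lower bound on it with every upper
   bound, so the set of (beta, gamma, T) admitting a solution is again cut out
   by finitely many homogeneous linear inequalities: a convex polyhedral cone. *)

Section FourierMotzkin.
Variable R : realFieldType.

(* Starting the maximum from the least upper bound covers the case of no lower bounds. *)
Lemma exists_between (I1 I2 : finType) (l : I1 -> R) (u : I2 -> R) :
  (forall i j, l i <= u j) -> exists t, (forall i, l i <= t) /\ (forall j, t <= u j).
Proof.
move=> le_lu; pose t0 := \big[Order.min/0]_j u j.
exists (\big[Order.max/t0]_i l i); split=> [i|j]; first exact: le_bigmax.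
by apply: bigmax_le => [|i _]; [exact: bigmin_le | exact: le_lu].
Qed.

Lemma fourier_motzkin (I : finType) (y a : I -> R) :
  (exists t, forall i, 0 <= y i + a i * t) <->
  (forall i, a i = 0 -> 0 <= y i) /\
  (forall i j, 0 < a i -> a j < 0 -> 0 <= y i * - a j + y j * a i).
Proof.
split=> [[t yt_ge0]|[y_ge0 yy_ge0]].
  split=> [i ai0|i j ai_gt0 aj_lt0]; first by have := yt_ge0 i; rewrite ai0 mul0r addr0.
  have -> : y i * - a j + y j * a i = (y i + a i * t) * - a j + (y j + a j * t) * a i by ring.
  by apply: addr_ge0; apply: mulr_ge0; rewrite ?oppr_ge0 ?yt_ge0 ?ltW.
pose l (i : {i | 0 < a i}) := - y (val i) / a (val i).
pose u (j : {j | a j < 0}) := - y (val j) / a (val j).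
have [|t [l_le u_ge]] := @exists_between _ _ l u.
  move=> [i /= ai_gt0] [j /= aj_lt0]; rewrite -subr_ge0 /l /u /=.
  have -> : - y j / a j - - y i / a i = (y i * - a j + y j * a i) / (a i * - a j).
    by field; rewrite ltr0_neq0 // lt0r_neq0.
  by apply: divr_ge0; [exact: yy_ge0 | apply: mulr_ge0; rewrite ?oppr_ge0 ltW].
exists t => i; case: (ltgtP (a i) 0) => [ai_lt0|ai_gt0|ai0].
- have := u_ge (exist _ i ai_lt0); rewrite /u /= => t_le.
  have -> : y i + a i * t = - a i * (- y i / a i - t) by field; rewrite ltr0_neq0.
  by apply: mulr_ge0; rewrite ?subr_ge0 // oppr_ge0 ltW.
- have := l_le (exist _ i ai_gt0); rewrite /l /= => le_t.
  have -> : y i + a i * t = a i * (t - - y i / a i) by field; rewrite lt0r_neq0.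
  by apply: mulr_ge0; rewrite ?subr_ge0 // ltW.
- by rewrite ai0 mul0r addr0 y_ge0.
Qed.

End FourierMotzkin.

Section LinearClosure.
Variables (R : realFieldType) (V : lmodType R).

Lemma scalarD (f : V -> R) : scalar f -> {morph f : x y / x + y}.
Proof. by move=> f_scalar x y; have := f_scalar 1 x y; rewrite scale1r mul1r. Qed.

Lemma scalar_sum (f : V -> R) (I : Type) (r : seq I) (F : I -> V) :
  scalar f -> f (\sum_(i <- r) F i) = \sum_(i <- r) f (F i).
Proof.
move=> f_scalar; apply: big_morph; first exact: scalarD.
by rewrite -{1}(subrr 0) (zmod_morphism_linear f_scalar) subrr.
Qed.

Lemma scalar_comp (W : lmodType R) (phi : V -> W) (f : W -> R) :
  linear phi -> scalar f -> scalar (fun v => f (phi v)).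
Proof. by move=> phi_linear f_scalar a x y; rewrite phi_linear f_scalar. Qed.

Lemma scalar_entry m n (F : V -> 'M[R]_(m, n)) i j :
  linear F -> scalar (fun w => F w i j).
Proof. by move=> F_linear a x y; rewrite F_linear !mxE. Qed.

Lemma linear_cst0 (W : lmodType R) : linear (fun _ : V => 0 : W).
Proof. by move=> a x y; rewrite scaler0 addr0. Qed.

Lemma linear_add (W : lmodType R) (F G : V -> W) :
  linear F -> linear G -> linear (fun w => F w + G w).
Proof. by move=> F_linear G_linear a x y; rewrite F_linear G_linear scalerDr addrACA. Qed.

Lemma linear_sub (W : lmodType R) (F G : V -> W) :
  linear F -> linear G -> linear (fun w => F w - G w).
Proof.
by move=> F_linear G_linear a x y; rewrite F_linear G_linear scalerBr opprD addrACA.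
Qed.

Lemma linear_sum (W : lmodType R) (I : Type) (r : seq I) (F : I -> V -> W) :
  (forall i, linear (F i)) -> linear (fun w => \sum_(i <- r) F i w).
Proof.
move=> F_linear a x y; rewrite scaler_sumr -big_split.
by apply: eq_bigr => i _; rewrite F_linear.
Qed.

Lemma linear_mulmx m n p (M : 'M[R]_(m, n)) (F : V -> 'M[R]_(n, p)) :
  linear F -> linear (fun w => M *m F w).
Proof. by move=> F_linear a x y; rewrite F_linear mulmxDr scalemxAr. Qed.

Lemma linear_scale_cst (W : lmodType R) (g : V -> R) (z : W) :
  scalar g -> linear (fun w => g w *: z).
Proof. by move=> g_scalar a x y; rewrite g_scalar scalerDl scalerA. Qed.

End LinearClosure.

Lemma scalar_cV (R : realFieldType) n (f : 'cV[R]_n -> R) (x : 'cV[R]_n) :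
  scalar f -> f x = \sum_i f (delta_mx i 0) * x i 0.
Proof.
move=> f_scalar; rewrite {1}(matrix_sum_delta x) scalar_sum //.
by apply: eq_bigr => i _; rewrite big_ord1 (scalable_linear f_scalar) mulrC.
Qed.

Section Polyhedral.
Variable R : realFieldType.

Definition polyhedral (V : lmodType R) (P : V -> Prop) :=
  exists (I : finType) (f : I -> V -> R),
    (forall i, scalar (f i)) /\ forall x, P x <-> forall i, 0 <= f i x.

Lemma polyhedral_ext (V : lmodType R) (P Q : V -> Prop) :
  polyhedral P -> (forall x, P x <-> Q x) -> polyhedral Q.
Proof. by move=> [I [f [f_scalar Pf]]] PQ; exists I, f; split=> // x; rewrite -PQ. Qed.

Lemma polyhedralT {V : lmodType R} : polyhedral (fun _ : V => True).
Proof. by exists void, (fun _ _ => 0); split=> [[]|x]; split=> // _ []. Qed.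

Lemma polyhedralI (V : lmodType R) (P Q : V -> Prop) :
  polyhedral P -> polyhedral Q -> polyhedral (fun x => P x /\ Q x).
Proof.
move=> [I [f [f_scalar Pf]]] [I' [f' [f'_scalar Qf']]].
exists (I + I')%type, (fun k => match k with inl i => f i | inr i => f' i end).
split=> [[i|i] //|x]; rewrite Pf Qf'.
split=> [[Px Qx] [i|i]|PQx]; [exact: Px | exact: Qx |].
by split=> i; [apply: (PQx (inl i)) | apply: (PQx (inr i))].
Qed.

Lemma polyhedral_ge0 (V : lmodType R) (f : V -> R) :
  scalar f -> polyhedral (fun x => 0 <= f x).
Proof. by move=> f_scalar; exists unit, (fun _ => f); split=> // x; split=> [? []|/(_ tt)]. Qed.

Lemma polyhedral_eq (V : lmodType R) (f g : V -> R) : scalar f -> scalar g ->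
  polyhedral (fun x => f x = g x).
Proof.
move=> f_scalar g_scalar.
have le_poly (h h' : V -> R) : scalar h -> scalar h' -> polyhedral (fun x => 0 <= h x - h' x).
  by move=> h_scalar h'_scalar; apply/polyhedral_ge0/(linear_sub (W := R^o)).
apply: polyhedral_ext (polyhedralI (le_poly _ _ f_scalar g_scalar)
  (le_poly _ _ g_scalar f_scalar)) _ => x.
rewrite !subr_ge0; split=> [[ge_fg le_fg]|->]; last by rewrite lexx.
by apply/eqP; rewrite eq_le ge_fg le_fg.
Qed.

Lemma polyhedral_implies (V : lmodType R) (Q : Prop) (b : bool) (P : V -> Prop) :
  reflect Q b -> polyhedral P -> polyhedral (fun x => Q -> P x).
Proof.
case=> [q|nq] Ppoly; first by apply: polyhedral_ext Ppoly _ => x; split=> // /(_ q).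
by apply: polyhedral_ext polyhedralT _.
Qed.

Lemma polyhedral_all_seq (V : lmodType R) (I : eqType) (r : seq I) (P : I -> V -> Prop) :
  (forall i, polyhedral (P i)) -> polyhedral (fun x => forall i, i \in r -> P i x).
Proof.
move=> Ppoly; elim: r => [|i r IHr].
  by apply: polyhedral_ext polyhedralT _.
apply: polyhedral_ext (polyhedralI (Ppoly i) IHr) _ => x.
split=> [[Pix Prx] j|Px]; last by split=> [|j jr]; apply: Px; rewrite inE ?eqxx ?jr ?orbT.
by rewrite inE => /orP[/eqP->|/Prx].
Qed.

Lemma polyhedral_all (V : lmodType R) (I : finType) (P : I -> V -> Prop) :
  (forall i, polyhedral (P i)) -> polyhedral (fun x => forall i, P i x).
Proof.
move=> /(polyhedral_all_seq (enum I)) Ppoly; apply: polyhedral_ext Ppoly _ => x.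
by split=> Px i => [|_]; apply: Px; rewrite mem_enum.
Qed.

Lemma polyhedral_all_nat (V : lmodType R) (n : nat) (Q : pred nat) (P : nat -> V -> Prop) :
  (forall m, Q m -> (m < n)%N) -> (forall m, polyhedral (P m)) ->
  polyhedral (fun x => forall m, Q m -> P m x).
Proof.
move=> Q_lt Ppoly.
apply: polyhedral_ext
  (polyhedral_all_seq (iota 0 n) (fun m => polyhedral_implies (@idP (Q m)) (Ppoly m))) _ => x.
split=> Px m => [Qm|_]; apply: Px => //.
by rewrite mem_iota add0n Q_lt.
Qed.

Lemma polyhedral_entry_eq0 (V : lmodType R) m n (F : V -> 'M[R]_(m, n)) i j :
  linear F -> polyhedral (fun w => F w i j = 0).
Proof.
move=> F_linear; apply: polyhedral_eq; first exact: scalar_entry.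
exact: (@linear_cst0 _ _ R^o).
Qed.

Lemma polyhedral_mx_eq (V : lmodType R) m n (F G : V -> 'M[R]_(m, n)) :
  linear F -> linear G -> polyhedral (fun w => F w = G w).
Proof.
move=> F_linear G_linear.
have entries_eq i : polyhedral (fun w => forall j, F w i j = G w i j).
  by apply: polyhedral_all => j; apply: polyhedral_eq; apply: scalar_entry.
by apply: polyhedral_ext (polyhedral_all entries_eq) _ => w; split=> [/matrixP|->].
Qed.

Lemma polyhedral_nonneg (V : lmodType R) n (F : V -> 'cV[R]_n) :
  linear F -> polyhedral (fun w => nonneg_cv (F w)).
Proof.
by move=> F_linear; apply: polyhedral_all => i; apply: polyhedral_ge0; apply: scalar_entry.
Qed.

Lemma polyhedral_comp (V W : lmodType R) (phi : W -> V) (P : V -> Prop) :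
  linear phi -> polyhedral P -> polyhedral (fun w => P (phi w)).
Proof.
move=> phi_linear [I [f [f_scalar Pf]]]; exists I, (fun i w => f i (phi w)).
by split=> [i a x y|w]; rewrite ?phi_linear ?f_scalar ?Pf.
Qed.

Lemma polyhedral_exR (V : lmodType R) (P : V * R^o -> Prop) :
  polyhedral P -> polyhedral (fun x => exists t : R, P (x, t)).
Proof.
move=> [I [f [f_scalar Pf]]].
pose g i x := f i (x, 0 : R^o); pose a i := f i (0, 1 : R^o).
have fE i x (t : R) : f i (x, t) = g i x + a i * t.
  have -> : (x, t) = t *: (0, 1 : R^o) + (x, 0 : R^o).
    by congr pair; rewrite /= ?scaler0 ?add0r /GRing.scale /= ?mulr1 ?addr0.
  by rewrite f_scalar addrC mulrC.
have g_scalar i : scalar (g i).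
  move=> c x y; rewrite /g -f_scalar; congr (f i _).
  by congr pair; rewrite /= scaler0 addr0.
(* One inequality per i with a i = 0, and one per pair of a lower and an upper bound on t. *)
exists ({i | a i == 0} + {i | 0 < a i} * {j | a j < 0})%type.
exists (fun k x => match k with
  | inl i => g (val i) x
  | inr (i, j) => g (val i) x * - a (val j) + g (val j) x * a (val i) end).
split=> [[i|[i j]] c x y|x]; rewrite ?g_scalar //; first ring.
have -> : (exists t, P (x, t)) <-> exists t, forall i, 0 <= g i x + a i * t.
  split=> [[t /Pf Pxt]|[t gat]]; exists t; first by move=> i; rewrite -fE.
  by apply/Pf => i; rewrite fE.
rewrite fourier_motzkin.
split=> [[g_ge0 gg_ge0] [[i ai0]|[[i ai_gt0] [j aj_lt0]]] /=|gg_ge0].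
- by apply: g_ge0; apply/eqP.
- exact: gg_ge0.
split=> [i ai0|i j ai_gt0 aj_lt0].
  by apply: (gg_ge0 (inl (exist _ i (introT eqP ai0)))).
by apply: (gg_ge0 (inr (exist _ i ai_gt0, exist _ j aj_lt0))).
Qed.

Lemma polyhedral_excV n : forall (V : lmodType R) (P : V * 'cV[R]_n -> Prop),
  polyhedral P -> polyhedral (fun x => exists y, P (x, y)).
Proof.
elim: n => [|n IHn] V P Ppoly.
  have zero_linear : linear (fun x : V => (x, 0 : 'cV[R]_0)).
    by move=> a x y; congr pair; rewrite /= scaler0 addr0.
  apply: polyhedral_ext (polyhedral_comp zero_linear Ppoly) _ => x.
  by split=> [|[y]]; [exists 0 | rewrite (flatmx0 y)].
pose phi (w : (V * 'cV[R]_n) * R^o) := (w.1.1, col_mx (w.2 : R)%:M w.1.2).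
have phi_linear : linear phi.
  move=> a [[x y] t] [[x' y'] t']; congr pair.
  by rewrite /= scale_col_mx add_col_mx scale_scalar_mx raddfD.
apply: polyhedral_ext (IHn _ _ (polyhedral_exR (polyhedral_comp phi_linear Ppoly))) _ => x.
split=> [[y [t Pxyt]]|[y Pxy]]; first by exists (col_mx (t : R)%:M y).
exists (dsubmx (y : 'cV_(1 + n))), (usubmx (y : 'cV_(1 + n)) 0 0).
by rewrite /phi /= -mx11_scalar vsubmxK.
Qed.

Lemma polyhedral_convex (V : lmodType R) (P : V -> Prop) (x y : V) (l : R) :
  polyhedral P -> 0 <= l <= 1 -> P x -> P y -> P (l *: x + (1 - l) *: y).
Proof.
move=> [I [f [f_scalar Pf]]] /andP[l_ge0 l_le1] /Pf Px /Pf Py; apply/Pf => i.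
rewrite f_scalar (scalable_linear (f_scalar i)).
by rewrite addr_ge0 ?mulr_ge0 ?subr_ge0.
Qed.

End Polyhedral.

Section ValidityRegionShape.
Variables (R : realFieldType) (K J : nat).
Local Notation X := (('cV[R]_K * 'cV[R]_J) * R^o)%type.

Lemma convex3_of_polyhedral (S : 'cV[R]_K -> 'cV[R]_J -> R -> Prop) :
  polyhedral (fun z : X => S z.1.1 z.1.2 z.2) -> convex3 S.
Proof.
move=> Spoly b1 g1 T1 b2 g2 T2 l l01 S1 S2.
exact: (@polyhedral_convex _ _ _ (((b1, g1), T1) : X) (((b2, g2), T2) : X) l Spoly l01 S1 S2).
Qed.

Lemma scalar_cV3E (f : X -> R) b g T : scalar f ->
  f ((b, g), T) = \sum_i f ((delta_mx i 0, 0), 0) * b i 0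
                + \sum_j f ((0, delta_mx j 0), 0) * g j 0 + T * f ((0, 0), 1).
Proof.
move=> f_scalar.
have inK_linear : linear (fun b : 'cV[R]_K => ((b, 0), 0) : X).
  by move=> a x y; congr (pair (pair _ _) _); rewrite /= ?scaler0 ?mulr0 addr0.
have inJ_linear : linear (fun g : 'cV[R]_J => ((0, g), 0) : X).
  by move=> a x y; congr (pair (pair _ _) _); rewrite /= ?scaler0 ?mulr0 addr0.
rewrite -(scalar_cV b (scalar_comp inK_linear f_scalar)).
rewrite -(scalar_cV g (scalar_comp inJ_linear f_scalar)).
have -> : ((b, g), T) = ((b, 0), 0) + ((0, g), 0) + T *: ((0, 0), 1) :> X.
  congr (pair (pair _ _) _); rewrite /= ?scaler0 ?addr0 ?add0r //.
  exact: (esym (mulr1 T)).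
by rewrite !(scalarD f_scalar) (scalable_linear f_scalar).
Qed.

Lemma polyhedral_cone_of_polyhedral (S : 'cV[R]_K -> 'cV[R]_J -> R -> Prop) :
  polyhedral (fun z : X => S z.1.1 z.1.2 z.2) -> polyhedral_cone S.
Proof.
move=> [I [f [f_scalar Sf]]]; pose fk (k : 'I_#|I|) := f (enum_val k).
exists #|I|, (\matrix_(k, i) fk k ((delta_mx i 0, 0), 0)),
  (\matrix_(k, j) fk k ((0, delta_mx j 0), 0)), (\col_k fk k ((0, 0), 1)) => b g T.
set M := (E in nonneg_cv E).
have ME k : M k 0 = fk k ((b, g), T).
  rewrite /fk (scalar_cV3E _ _ _ (f_scalar _)) !mxE.
  by congr (_ + _ + _); apply: eq_bigr => i _; rewrite mxE.
apply: iff_trans (Sf ((b, g), T)) _.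
split=> [Sbg k|M_ge0 i]; first by rewrite ME; apply: Sbg.
by rewrite -(enum_rankK i); have := M_ge0 (enum_rank i); rewrite ME.
Qed.

End ValidityRegionShape.

Section BaseSequenceSystem.
Variables (R : realFieldType) (K J : nat) (A : 'M[R]_(K, J)) (N : nat).
Variables (Ks : nat -> {set 'I_K}) (Js : nat -> {set 'I_J}) (v : nat -> pvar K J).
Variables (xd : nat -> 'cV[R]_K) (qd : nat -> 'cV[R]_J).

(* [bs_optimal ... beta gamma T] unfolds to [exists u0 uN qN q0 x0 xN p0 pN tau,
   bs_system beta gamma T u0 uN qN q0 x0 xN p0 pN tau]. *)
Definition bs_system (beta : 'cV[R]_K) (gamma : 'cV[R]_J) (T : R)
    (u0 uN qN q0 : 'cV[R]_J) (x0 xN p0 pN : 'cV[R]_K) (tau : nat -> R) : Prop :=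
  let x := xstate x0 xd tau in
  let q := qstate N qN qd tau in
  (forall n, (1 <= n < N)%N ->
     (forall k, v n = inr k -> x n k 0 = 0) /\
     (forall j, v n = inl j -> q n j 0 = 0)) /\
  \sum_(1 <= n < N.+1) tau n = T /\
  (forall j, j \in Js 0%N -> u0 j 0 = 0) /\
  (forall k, k \notin Ks 0%N -> x0 k 0 = 0) /\
  (forall k, k \in Ks 0%N -> p0 k 0 = 0) /\
  (forall j, j \notin Js 0%N -> q0 j 0 = 0) /\
  (forall k, k \in Ks N.+1 -> pN k 0 = 0) /\
  (forall j, j \notin Js N.+1 -> qN j 0 = 0) /\
  (forall j, j \in Js N.+1 -> uN j 0 = 0) /\
  (forall k, k \notin Ks N.+1 -> xN k 0 = 0) /\
  A *m u0 + x0 = beta /\ A^T *m pN - qN = gamma /\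
  A *m uN + xN - x N = 0 /\ A^T *m p0 - q0 + q 0%N = 0 /\
  nonneg_cv u0 /\ nonneg_cv uN /\ nonneg_cv qN /\ nonneg_cv q0 /\
  nonneg_cv x0 /\ nonneg_cv xN /\ nonneg_cv p0 /\ nonneg_cv pN /\
  (forall n, (1 <= n <= N)%N -> 0 <= tau n) /\
  (forall n, (n <= N)%N -> nonneg_cv (x n) /\ nonneg_cv (q n)).

Lemma polyhedral_bs_system (V : lmodType R)
    (beta : V -> 'cV[R]_K) (gamma : V -> 'cV[R]_J) (T : V -> R)
    (u0 uN qN q0 : V -> 'cV[R]_J) (x0 xN p0 pN : V -> 'cV[R]_K) (tau : V -> nat -> R) :
  linear beta -> linear gamma -> scalar T ->
  linear u0 -> linear uN -> linear qN -> linear q0 ->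
  linear x0 -> linear xN -> linear p0 -> linear pN -> (forall m, scalar (tau^~ m)) ->
  polyhedral (fun w => bs_system (beta w) (gamma w) (T w) (u0 w) (uN w) (qN w) (q0 w)
                                 (x0 w) (xN w) (p0 w) (pN w) (tau w)).
Proof.
move=> beta_lin gamma_lin T_lin u0_lin uN_lin qN_lin q0_lin.
move=> x0_lin xN_lin p0_lin pN_lin tau_lin.
have x_lin n : linear (fun w => xstate (x0 w) xd (tau w) n).
  by apply: linear_add => //; apply: linear_sum => m; apply: linear_scale_cst.
have q_lin n : linear (fun w => qstate N (qN w) qd (tau w) n).
  by apply: linear_add => //; apply: linear_sum => m; apply: linear_scale_cst.
apply: polyhedralI.
  apply: (polyhedral_all_nat (n := N)) => [n /andP[_ //]|n].
  by apply: polyhedralI; apply: polyhedral_all => i;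
    apply: (polyhedral_implies eqP); apply: polyhedral_entry_eq0.
apply: polyhedralI; first by apply: polyhedral_eq => //; apply: (linear_sum (W := R^o)).
do 8 (apply: polyhedralI; first by apply: polyhedral_all => i;
  apply: (polyhedral_implies idP); apply: polyhedral_entry_eq0).
apply: polyhedralI.
  by apply: polyhedral_mx_eq => //; apply: linear_add => //; apply: linear_mulmx.
apply: polyhedralI.
  by apply: polyhedral_mx_eq => //; apply: linear_sub => //; apply: linear_mulmx.
apply: polyhedralI.
  apply: polyhedral_mx_eq; last exact: linear_cst0.
  by apply: linear_sub => //; apply: linear_add => //; apply: linear_mulmx.
apply: polyhedralI.
  apply: polyhedral_mx_eq; last exact: linear_cst0.
  by apply: linear_add => //; apply: linear_sub => //; apply: linear_mulmx.
do 8 (apply: polyhedralI; first by apply: polyhedral_nonneg).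
apply: polyhedralI.
  by apply: (polyhedral_all_nat (n := N.+1)) => [n /andP[_ //]|n]; apply: polyhedral_ge0.
apply: (polyhedral_all_nat (n := N.+1)) => // n.
by apply: polyhedralI; apply: polyhedral_nonneg.
Qed.

Lemma bs_system_tau_ext beta gamma T u0 uN qN q0 x0 xN p0 pN (tau tau' : nat -> R) :
  (forall m, (m <= N)%N -> tau m = tau' m) ->
  bs_system beta gamma T u0 uN qN q0 x0 xN p0 pN tau ->
  bs_system beta gamma T u0 uN qN q0 x0 xN p0 pN tau'.
Proof.
move=> tauE.
have xE n : (n <= N)%N -> xstate x0 xd tau n = xstate x0 xd tau' n.
  by move=> n_le; congr (_ + _); apply: eq_big_nat => m /andP[_ m_lt]; rewrite tauE //; lia.
have qE n : qstate N qN qd tau n = qstate N qN qd tau' n.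
  by congr (_ + _); apply: eq_big_nat => m /andP[_ m_lt]; rewrite tauE.
have TE : \sum_(1 <= m < N.+1) tau m = \sum_(1 <= m < N.+1) tau' m.
  by apply: eq_big_nat => m /andP[_ m_lt]; rewrite tauE.
move=> [Hpivot [HT [? [? [? [? [? [? [? [? [? [? [HxN [Hq0
  [? [? [? [? [? [? [? [? [Htau Hxq]]]]]]]]]]]]]]]]]]]]]]].
split.
  move=> n n_lt; have n_le : (n <= N)%N by case/andP: n_lt => _ /ltnW.
  by rewrite -xE // -qE; apply: Hpivot.
split; first by rewrite -TE.
do 10 (split; first by []).
split; first by rewrite -xE.
split; first by rewrite -qE.
do 8 (split; first by []).
split; first by move=> n n_le; rewrite -tauE ?Htau //; case/andP: n_le.
by move=> n n_le; rewrite -xE // -qE; apply: Hxq.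
Qed.

(* Coordinate 0 of [y] is a dummy unknown, so that [tau_of y m] needs no index shift. *)
Definition tau_of (y : 'cV[R]_N.+1) (m : nat) : R := y (inord m) 0.

Local Notation X := (('cV[R]_K * 'cV[R]_J) * R^o)%type.
Local Notation W := (((((((((X * 'cV[R]_J) * 'cV[R]_J) * 'cV[R]_J) * 'cV[R]_J)
  * 'cV[R]_K) * 'cV[R]_K) * 'cV[R]_K) * 'cV[R]_K) * 'cV[R]_N.+1)%type.

(* w = (((((((((((beta, gamma), T), u0), uN), qN), q0), x0), xN), p0), pN), y) *)
Definition bs_system_at (w : W) : Prop :=
  bs_system w.1.1.1.1.1.1.1.1.1.1.1 w.1.1.1.1.1.1.1.1.1.1.2 w.1.1.1.1.1.1.1.1.1.2
    w.1.1.1.1.1.1.1.1.2 w.1.1.1.1.1.1.1.2 w.1.1.1.1.1.1.2 w.1.1.1.1.1.2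
    w.1.1.1.1.2 w.1.1.1.2 w.1.1.2 w.1.2 (tau_of w.2).

Lemma polyhedral_validity_region :
  polyhedral (fun z : X => validity_region A N Ks Js v xd qd z.1.1 z.1.2 z.2).
Proof.
have sys_poly : polyhedral bs_system_at.
  by apply: polyhedral_bs_system => // m a x y; rewrite /tau_of !mxE.
have T_poly : polyhedral (fun z : X => 0 <= z.2) by apply: polyhedral_ge0.
have ex_poly := polyhedral_excV (polyhedral_excV (polyhedral_excV
  (polyhedral_excV (polyhedral_excV (polyhedral_excV (polyhedral_excV
  (polyhedral_excV (polyhedral_excV sys_poly)))))))).
apply: polyhedral_ext (polyhedralI T_poly ex_poly) _ => z; split=> -[T_ge0].
  move=> [u0 [uN [qN [q0 [x0 [xN [p0 [pN [y sys]]]]]]]]].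
  by split => //; exists u0, uN, qN, q0, x0, xN, p0, pN, (tau_of y).
move=> [u0 [uN [qN [q0 [x0 [xN [p0 [pN [tau sys]]]]]]]]].
split => //; exists u0, uN, qN, q0, x0, xN, p0, pN, (\col_(i < N.+1) tau i).
by apply: bs_system_tau_ext sys => m m_le; rewrite /tau_of mxE inordK.
Qed.

End BaseSequenceSystem.

Theorem mainTheorem6 (R : realFieldType) (K J : nat)
    (A : 'M[R]_(K, J)) (b : 'cV[R]_K) (c : 'cV[R]_J)
    (N : nat) (Ks : nat -> {set 'I_K}) (Js : nat -> {set 'I_J})
    (v : nat -> pvar K J) (u : nat -> 'cV[R]_J) (xd : nat -> 'cV[R]_K)
    (p : nat -> 'cV[R]_K) (qd : nat -> 'cV[R]_J) :
  base_sequence A b c N Ks Js v u xd p qd ->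
  convex3 (validity_region A N Ks Js v xd qd) /\
  polyhedral_cone (validity_region A N Ks Js v xd qd).
Proof.
move=> _; split; [apply: convex3_of_polyhedral | apply: polyhedral_cone_of_polyhedral];
  exact: polyhedral_validity_region.
Qed.
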